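(* Let $G$ be a finite connected graph with girth at least $5$ and $\gamma(G)>\delta(G)$, and let $H$ be the graph obtained from $G$ by subdividing every edge of $G$ exactly once. Then $\mathrm{cc}(H)\ge \delta(G)+1$.
   Context: All graphs are finite, connected and reflexive (a loop at every vertex; moving along a loop means passing); loops are ignored for girth, degrees and neighbourhoods. $\gamma$ denotes domination number and $\delta$ minimum degree. Cops and Attacking Robbers: the cop player places $k$ cops on vertices, then the robber chooses a vertex. In each round the cops move (each cop moves to an adjacent vertex or passes), then the robber moves (to an adjacent vertex or passes). The cops win if after finitely many moves a cop moves onto the robber's vertex. Additionally, if the robber moves onto a vertex occupied by a cop, exactly one cop on that vertex is removed from the game; the robber's initial placement on a cop's vertex does not count as an attack. Both players play optimally. The attacking cop number $\mathrm{cc}(G)$ is the least $k$ such that $k$ cops can guarantee a win. *)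

(* Simple graphs: symmetric irreflexive relation on a finType;
   the loops of the reflexive graph are modelled by allowing "stay" moves. *)
From mathcomp Require Import all_boot.
Set Implicit Arguments. Unset Strict Implicit. Unset Printing Implicit Defensive.

Section Graphs.
Variables (T : finType) (e : rel T).

Definition deg (x : T) : nat := #|[set y | e x y]|.
Definition mindeg : nat := \big[minn/#|T|]_(x : T) deg x.

Definition dominating (D : {set T}) : bool :=
  [forall x, (x \in D) || [exists y in D, e x y]].
Definition domnum : nat := \big[minn/#|T|]_(D : {set T} | dominating D) #|D|.

Definition girth_ge (g : nat) : Prop :=
  forall p : seq T, uniq p -> 3 <= size p -> cycle e p -> g <= size p.

Definition connected_graph : Prop := forall x y : T, connect e x y.

Definition is_edge (s : {set T}) : bool :=
  [exists x, exists y, e x y && (s == [set x; y])].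
Definition edgeT := {s : {set T} | is_edge s}.

Definition subdiv_vertex := (T + edgeT)%type.
Definition subdiv_rel : rel subdiv_vertex := fun u v =>
  match u, v with
  | inl x, inr s => x \in val s
  | inr s, inl x => x \in val s
  | _, _ => false
  end.
End Graphs.

Section Game.
Variables (V : finType) (adj : rel V).

Definition step (a b : V) : bool := (a == b) || adj a b.

(* cops_force c r : it is the cops' turn, the active cops occupy the
   positions listed in c (one entry per cop), the robber is on r, and the
   cops can force a capture in finitely many moves (least fixed point).
   A round: every cop makes a step (c -> c'); if some cop lands on r the
   cops win; otherwise the robber steps to r', and if r' is occupied by a
   cop exactly one cop there is removed (rem r' c'). *)
Inductive cops_force : seq V -> V -> Prop :=
| cops_force_step (c c' : seq V) (r : V) :
    all2 step c c' ->
    (r \in c' \/ (forall r' : V, step r r' -> cops_force (rem r' c') r')) ->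
    cops_force c r.

(* k cops can guarantee a win: some initial placement of k cops beats
   every initial robber vertex (initial placement is not an attack). *)
Definition cops_win (k : nat) : Prop :=
  exists c : seq V, size c = k /\ forall r : V, cops_force c r.
End Game.

From HB Require Import structures.
From mathcomp Require Import all_boot.
Set Implicit Arguments. Unset Strict Implicit. Unset Printing Implicit Defensive.

(* The robber maintains an invariant while at most delta(G) cops are in play:
   either he is on an original vertex v and no cop is within distance 1 of v
   in H, or he is on the subdivision vertex of an edge vu and no cop is within
   distance 2 of u in H ([ball1] and [ball2] are these balls of H around
   original vertices).  Initially such a v exists, since fewer than gamma(G)
   cops cannot dominate G.  From the edge vu the robber walks to u.  From v,
   when a cop has come next to v, girth >= 5 puts each cop in the 2-ball of at
   most one neighbour of v, so counting cops against the >= delta(G)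
   neighbours gives a neighbour u whose 2-ball is empty, or contains only a
   cop on the edge vu, which the robber attacks. *)

HB.instance Definition _ := SemiGroup.isComLaw.Build nat minn minnA minnC.

Lemma bigmin_leq (I : finType) (P : pred I) (F : I -> nat) x0 i :
  P i -> \big[minn/x0]_(j | P j) F j <= F i.
Proof. by move=> Pi; rewrite (bigD1 i) //= geq_minl. Qed.

Lemma all2_all (S U : Type) (r : S -> U -> bool) (P : pred S) (Q : pred U) s t :
  all2 r s t -> (forall x y, r x y -> P x -> Q y) -> all P s -> all Q t.
Proof.
move=> + PQ; elim: s t => [|x s IHs] [|y t] //= /andP[rxy rst] /andP[Px Ps].
by rewrite (PQ x y) // IHs.
Qed.

Lemma sum_count_le_size (I : finType) (J : eqType) (P : pred I) (a : I -> pred J) s :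
  (forall x i j, x \in s -> P i -> P j -> a i x -> a j x -> i = j) ->
  \sum_(i | P i) count (a i) s <= size s.
Proof.
move=> a_uniq; under eq_bigr => i _ do rewrite -sum1_count.
rewrite (exchange_big_dep predT) //= -sum1_size big_seq [leqRHS]big_seq.
apply: leq_sum => x xs; rewrite sum1_card.
by apply/card_le1_eqP => i j /andP[Pi aix] /andP[Pj ajx]; apply: a_uniq xs Pj Pi ajx aix.
Qed.

Section Subdivision.
Variables (T : finType) (e : rel T).
Hypothesis e_sym : symmetric e.
Hypothesis e_irr : irreflexive e.
Hypothesis e_girth : girth_ge e 5.

Local Notation V := (subdiv_vertex e).
Local Notation H := (@subdiv_rel T e).

Definition ball1 (v : T) (p : V) : bool :=
  match p with inl y => y == v | inr t => v \in val t end.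

Definition ball2 (u : T) (p : V) : bool :=
  match p with inl y => (y == u) || e u y | inr t => u \in val t end.

Lemma mindeg_le_deg v : mindeg e <= deg e v.
Proof. exact: bigmin_leq. Qed.

Lemma domnum_le_card D : dominating e D -> domnum e <= #|D|.
Proof. exact: bigmin_leq. Qed.

Lemma is_edge_set2 v u : e v u -> is_edge e [set v; u].
Proof.
by move=> evu; apply/existsP; exists v; apply/existsP; exists u; rewrite evu eqxx.
Qed.

Definition subdiv_edge v u (evu : e v u) : edgeT e :=
  exist (fun s => is_edge e s) _ (is_edge_set2 evu).

Lemma is_edge_eq_or_adj t x y :
  is_edge e t -> x \in t -> y \in t -> x = y \/ e x y.
Proof.
case/existsP=> a /existsP[b /andP[eab /eqP ->]].
rewrite !inE => /orP[]/eqP-> /orP[]/eqP->; auto.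
by right; rewrite e_sym.
Qed.

Lemma is_edge_adj_mem t v : is_edge e t -> v \in t -> exists2 w, w \in t & e v w.
Proof.
case/existsP=> a /existsP[b /andP[eab /eqP ->]].
rewrite !inE => /orP[]/eqP->; first by exists b; rewrite // !inE eqxx orbT.
by exists a; rewrite ?inE ?eqxx // e_sym.
Qed.

Lemma step_ball1 v p : step H p (inl v) -> ball1 v p.
Proof. by case: p => [y|t]; rewrite /step /= ?orbF. Qed.

Lemma ball1_step v p : ball1 v p -> step H (inl v) p.
Proof. by case: p => [y /eqP->|t vt]; rewrite /step ?eqxx //= vt orbT. Qed.

Lemma step_ball2 u p p' : step H p p' -> ball1 u p' -> ball2 u p.
Proof.
rewrite /step; case: p => [y|t]; case: p' => [x|s] //=; rewrite ?orbF.
- by move=> /eqP[->] ->.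
- move=> ys us; have [<-|eyu] := is_edge_eq_or_adj (valP s) ys us.
    by rewrite eqxx.
  by rewrite e_sym eyu orbT.
- by move=> xt /eqP<-.
- by move=> /eqP[->].
Qed.

Lemma adj_neq x y : e x y -> x != y.
Proof. by apply: contraTneq => ->; rewrite e_irr. Qed.

Lemma no_triangle a b c : e a b -> e b c -> e c a -> False.
Proof.
move=> eab ebc eca; have := e_girth (p := [:: a; b; c]).
rewrite /= !inE !negb_or eab ebc eca (adj_neq eab) (adj_neq ebc).
by rewrite [a == c]eq_sym (adj_neq eca) => /(_ isT isT isT).
Qed.

Lemma no_square a b c d :
  e a b -> e b c -> e c d -> e d a -> a != c -> b != d -> False.
Proof.
move=> eab ebc ecd eda nac nbd; have := e_girth (p := [:: a; b; c; d]).
rewrite /= !inE !negb_or eab ebc ecd eda nac nbd (adj_neq eab) (adj_neq ebc).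
by rewrite (adj_neq ecd) [a == d]eq_sym (adj_neq eda) => /(_ isT isT isT).
Qed.

Lemma ball2_adj_uniq v u1 u2 p :
  p != inl v -> e v u1 -> e v u2 -> ball2 u1 p -> ball2 u2 p -> u1 = u2.
Proof.
move=> pv evu1 evu2; have [//|nu12] := eqVneq u1 u2; case: p pv => [y|t] /= pv.
- have nvy : v != y by apply: contraNneq pv => ->.
  case/orP=> [/eqP yu1|eu1y]; case/orP=> [/eqP yu2|eu2y].
  + by rewrite -yu1 -yu2.
  + by subst y; exfalso; apply: no_triangle evu2 eu2y _; rewrite e_sym.
  + by subst y; exfalso; apply: no_triangle evu1 eu1y _; rewrite e_sym.
  + by exfalso; apply: no_square evu1 eu1y _ _ nvy nu12; rewrite e_sym.
- move=> u1t u2t; have [//|eu12] := is_edge_eq_or_adj (valP t) u1t u2t.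
  by exfalso; apply: no_triangle evu1 eu12 _; rewrite e_sym.
Qed.

Definition escape_neighbor v u (c : seq V) : bool :=
  e v u && ((count (ball2 u) c == 0) ||
            (count (ball2 u) c == 1) && has (fun p => ball1 v p && ball2 u p) c).

Lemma exists_escape_neighbor v c :
  all (fun p => p != inl v) c -> size c <= deg e v -> has (ball1 v) c ->
  exists u, escape_neighbor v u c.
Proof.
move=> c_v size_c /hasP[p pc vp].
have [u|no_escape] := pickP (escape_neighbor v ^~ c); first by exists u.
have [t pt vt] : exists2 t, p = inr t & v \in val t.
  case: p pc vp => [y|t] pc /=; last by exists t.
  by move/eqP=> yv; move: (allP c_v _ pc); rewrite yv eqxx.
have [w wt evw] := is_edge_adj_mem (valP t) vt.
have count_gt0 u : e v u -> 0 < count (ball2 u) c.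
  move=> evu; move/negbT: (no_escape u).
  by rewrite /escape_neighbor evu lt0n => /norP[].
have count_w : 1 < count (ball2 w) c.
  have: has (fun q => ball1 v q && ball2 w q) c.
    by apply/hasP; exists p; rewrite // pt /= vt.
  move: (no_escape w) (count_gt0 w evw); rewrite /escape_neighbor evw /=.
  by case: count => [|[|n]] //= ->.
suff: deg e v < size c by rewrite ltnNge size_c.
apply: leq_trans (sum_count_le_size (P := e v) (a := ball2) _); last first.
  by move=> q i j qc; apply: ball2_adj_uniq; apply: (allP c_v).
rewrite /deg cardsE -sum1_card (bigD1 w) //= [X in _ < X](bigD1 w) //= -addSn.
apply: leq_add count_w _; apply: leq_sum => u /andP[evu _]; exact: count_gt0.
Qed.

Definition robber_safe (c : seq V) (r : V) : bool :=
  match r with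
  | inl v => all (predC (ball1 v)) c
  | inr s => [exists u in val s, all (predC (ball2 u)) c]
  end.

Lemma robber_escapes_from_vertex v c :
  size c <= deg e v -> all (fun p => p != inl v) c ->
  exists2 r, step H (inl v) r & robber_safe (rem r c) r.
Proof.
move=> size_c c_v; have v_notin : inl v \notin c.
  by apply/negP => /(allP c_v); rewrite eqxx.
have [near|/hasPn far] := boolP (has (ball1 v) c); last first.
  by exists (inl v); rewrite ?rem_id /step ?eqxx //; apply/allP => p /far.
have [u /andP[evu]] := exists_escape_neighbor c_v size_c near.
case/orP=> [/eqP free | /andP[/eqP single /hasP[p pc /andP[vp up]]]].
- have c_u : all (predC (ball2 u)) c by rewrite all_predC has_count free.
  exists (inr (subdiv_edge evu)); first by rewrite /step /= !inE eqxx.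
  rewrite rem_id; last by apply/negP => /(allP c_u); rewrite /= !inE eqxx orbT.
  by apply/existsP; exists u; rewrite /= !inE eqxx orbT.
- exists p; first exact: ball1_step.
  case: p pc vp up => [y|t] pc vp up.
    by move: (allP c_v _ pc); rewrite -(eqP vp) eqxx.
  apply/existsP; exists u; apply/andP; split=> //.
  by rewrite all_predC has_count count_rem single pc up.
Qed.

Lemma robber_escapes c c' r :
  size c <= mindeg e -> robber_safe c r -> all2 (step H) c c' ->
  r \notin c' /\ exists2 r', step H r r' & robber_safe (rem r' c') r'.
Proof.
move=> size_c + cc'; case: r => [v|s] /=.
- move=> c_v; have c'_v : all (fun p => p != inl v) c'.
    apply: all2_all cc' _ c_v => p p' pp' /=; apply: contraNneq => p'v.
    by apply: step_ball1; rewrite -p'v.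
  split; first by apply/negP => /(allP c'_v); rewrite eqxx.
  apply: robber_escapes_from_vertex c'_v; move: cc'; rewrite all2E => /andP[/eqP <- _].
  exact: leq_trans size_c (mindeg_le_deg v).
- case/existsP=> u /andP[us c_u].
  have c'_u : all (predC (ball1 u)) c'.
    by apply: all2_all cc' _ c_u => p p' pp' /=; apply: contra; apply: step_ball2.
  split; first by apply/negP => /(allP c'_u) /=; rewrite us.
  exists (inl u); first by rewrite /step /= us.
  by rewrite rem_id //; apply/negP => /(allP c'_u) /=; rewrite eqxx.
Qed.

Lemma robber_safe_not_forced c r :
  cops_force H c r -> size c <= mindeg e -> robber_safe c r -> False.
Proof.
(* The generated induction principle of cops_force has no hypothesis for the
   nested recursive occurrence, hence the explicit fixpoint. *)
move: c r; fix IH 3 => c r [{}c c' {}r cc' win] size_c safe_r.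
have [r_c' [r' rr' safe_r']] := robber_escapes size_c safe_r cc'.
case: win => [r_in|escape]; first by rewrite r_in in r_c'.
apply: IH (escape r' rr') _ safe_r'.
move: cc'; rewrite all2E => /andP[/eqP size_c' _].
by rewrite (leq_trans (size_subseq (rem_subseq _ _))) // -size_c'.
Qed.

Lemma exists_robber_safe_vertex c :
  size c < domnum e -> exists v, robber_safe c (inl v).
Proof.
move=> size_c.
pose proj (p : V) := match p with inl y => Some y | inr t => [pick x in val t] end.
pose D := [set x in pmap proj c].
have /forallPn[v] : ~~ dominating e D.
  apply: contraTN size_c => /domnum_le_card domnum_D; rewrite -leqNgt.
  apply: leq_trans domnum_D _.
  by rewrite cardsE (leq_trans (card_size _)) // size_pmap count_size.
rewrite negb_or => /andP[vD /existsPn vD'].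
exists v; apply/allP => p pc /=.
have projD x : proj p = Some x -> x \in D.
  by move=> px; rewrite inE mem_pmap -px map_f.
case: p pc projD => [y|t] pc projD /=.
  by apply: contraNneq vD => <-; apply: projD.
apply/negP => vt; move: projD; rewrite /proj.
case: pickP => [x xt /(_ x erefl) xD|/(_ v)]; last by rewrite vt.
have [xv|exv] := is_edge_eq_or_adj (valP t) xt vt; first by rewrite -xv xD in vD.
by move: (vD' x); rewrite xD e_sym exv.
Qed.

End Subdivision.

Theorem lemma3 (T : finType) (e : rel T)
  (e_sym : symmetric e) (e_irr : irreflexive e)
  (G_conn : connected_graph e) (G_girth : girth_ge e 5)
  (G_dom : mindeg e < domnum e) :
  forall k : nat, cops_win (@subdiv_rel T e) k -> mindeg e + 1 <= k.
Proof.
move=> k [c [<- cops_c]]; rewrite addn1 ltnNge; apply/negP => size_c.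
have [v safe_v] := exists_robber_safe_vertex e_sym (leq_ltn_trans size_c G_dom).
exact: (robber_safe_not_forced e_sym e_irr G_girth (cops_c (inl v)) size_c safe_v).
Qed.
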